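(* Consider the online submodular partition problem (notation in context) with $m\ge 2$ users, in which resources arrive one at a time in an arbitrary order $j_1,\dots,j_n$ (a permutation of $\mathcal{R}$) and each must be irrevocably assigned on arrival. Let $G$ be the output of GREEDY-ON on this arrival order, with $u_t$ the user chosen at time $t$, $d^o_t$ the discriminant at time $t$ and $c_{u_t}$ the curvature of $Z_{u_t}$. Let $\Omega$ be an optimal (offline) partition with $Z(\Omega)>0$. Then for every arrival order, $$\frac{Z(G)}{Z(\Omega)}\ \ge\ \min\left(1,\ \frac{1}{\max_{1\le t\le n}\left\{\frac{1}{d^o_t}+c_{u_t}\right\}}\right),$$ with conventions $1/\infty=0$, $1/0=\infty$. Consequently the competitive ratio of GREEDY-ON is at least the minimum over arrival orders of the right-hand side.
   Context: Resources $\mathcal{R}$, $|\mathcal{R}|=n$; users $\mathcal{U}$, $|\mathcal{U}|=m$; each user $u$ has a monotone submodular $Z_u:2^{\mathcal{R}}\to\mathbb{R}$ with $Z_u(\emptyset)=0$. For $S\subseteq\mathcal{U}\times\mathcal{R}$, $S_u=\{r:(u,r)\in S\}$ and $Z(S)=\sum_u Z_u(S_u)$. A partition assigns each resource to exactly one user (a set of pairs in which each resource appears exactly once); $\Omega$ is a partition maximizing $Z$. $\rho^u_r(S)=Z_u(S_u\cup\{r\})-Z_u(S_u)$. Curvature of $Z_u$: $c_u=1-\min\{(Z_u(S\cup\{r\})-Z_u(S))/Z_u(\{r\}): S\subseteq\mathcal{R}, r\in\mathcal{R}\setminus S, Z_u(\{r\})>0\}$. GREEDY-ON: $G^0=\emptyset$;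 at time $t=1,\dots,n$, when resource $j_t$ arrives, assign it to a user $u_t\in\arg\max_u\rho^u_{j_t}(G^{t-1})$, breaking ties in favour of the user with least curvature $c_u$; set $G^t=G^{t-1}\cup\{(u_t,j_t)\}$; output $G=G^n$. Discriminant at time $t$: $d^o_t=\rho^{u_t}_{j_t}(G^{t-1})/\max_{u'\neq u_t}\rho^{u'}_{j_t}(G^{t-1})$ (set to $\infty$ if the denominator is $0$). *)

From HB Require Import structures.
From mathcomp Require Import all_boot all_order all_algebra.
Set Implicit Arguments. Unset Strict Implicit. Unset Printing Implicit Defensive.
Import Order.TTheory GRing.Theory Num.Theory.
Local Open Scope ring_scope.

Section OSP.
Variables (R : realFieldType) (Usr Res : finType) (Z : Usr -> {set Res} -> R).

Definition sec (S : {set Usr * Res}) (u : Usr) : {set Res} := [set r | (u, r) \in S].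
Definition Ztot (S : {set Usr * Res}) : R := \sum_(u : Usr) Z u (sec S u).
Definition rho (u : Usr) (r : Res) (S : {set Usr * Res}) : R :=
  Z u (r |: sec S u) - Z u (sec S u).

Definition is_partition (S : {set Usr * Res}) : bool :=
  [forall r : Res, #|[set u | (u, r) \in S]| == 1%N].

(* The min is taken with neutral element 1; all the ratios are <= 1 for a
   monotone submodular function, so this only matters when the index set is
   empty (Z_u({r}) = 0 for all r, i.e. Z_u = 0), where it gives c_u = 0. *)
Definition curv (u : Usr) : R :=
  1 - \big[Num.min/1]_(S : {set Res})
        \big[Num.min/1]_(r : Res | (r \notin S) && (0 < Z u [set r]))
           ((Z u (r |: S) - Z u S) / Z u [set r]).

(* extended nonnegative reals: None = +infinity *)
Definition ext := option R.
Definition einv (x : ext) : ext :=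
  match x with None => Some 0 | Some a => if a == 0 then None else Some a^-1 end.
Definition eaddr (x : ext) (c : R) : ext := omap (fun a => a + c) x.
Definition emax (x y : ext) : ext :=
  match x, y with Some a, Some b => Some (Num.max a b) | _, _ => None end.
Definition emin1 (x : ext) : R :=
  match x with None => 1 | Some a => Num.min 1 a end.

Definition discr (G : {set Usr * Res}) (u : Usr) (j : Res) : ext :=
  let second := \big[Num.max/0]_(v : Usr | v != u) rho v j G in
  if second == 0 then None else Some (rho u j G / second).

Definition greedy_choice (G : {set Usr * Res}) (u : Usr) (j : Res) : bool :=
  [forall v : Usr, rho v j G <= rho u j G] &&
  [forall v : Usr, (rho v j G == rho u j G) ==> (curv u <= curv v)].

Fixpoint greedy_ok (G : {set Usr * Res}) (run : seq (Usr * Res)) : bool :=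
  match run with
  | [::] => true
  | (u, j) :: rest => greedy_choice G u j && greedy_ok ((u, j) |: G) rest
  end.

(* max_t { 1/d^o_t + c_{u_t} } (all terms are >= 0, so 0 is a neutral start) *)
Fixpoint bound_max (G : {set Usr * Res}) (run : seq (Usr * Res)) : ext :=
  match run with
  | [::] => Some 0
  | (u, j) :: rest =>
      emax (eaddr (einv (discr G u j)) (curv u)) (bound_max ((u, j) |: G) rest)
  end.

End OSP.

From HB Require Import structures.
From mathcomp Require Import all_boot all_order all_algebra.
From mathcomp Require Import lra.
Import Order.TTheory GRing.Theory Num.Theory.
Set Implicit Arguments. Unset Strict Implicit. Unset Printing Implicit Defensive.
Local Open Scope ring_scope.

(* Let a_t be the greedy gain at time t, o(j) the owner of j in the optimum and
   M >= 1 a bound on every 1/d^o_t + c_{u_t}.  Adding the optimal pairs to G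
   one resource at a time costs, at step t, at most the gain of o(j_t) on j_t,
   which is 0 if o(j_t) = u_t and otherwise at most the second best gain
   a_t / d^o_t.  Adding the greedy pairs to the optimum gains at step t at
   least (1 - c_{u_t}) a_t, by the definition of curvature.  Hence
   Z(Omega) - Z(G) = [Z(Omega u G) - Z(G)] - [Z(Omega u G) - Z(Omega)]
   <= sum_t (1/d^o_t + c_{u_t} - 1) a_t <= (M - 1) Z(G). *)

Lemma emin1_einv_le (R : realFieldType) (B : R) :
  emin1 (einv (Some B)) <= (Num.max 1 B)^-1.
Proof.
case: (leP B 1) => B1; rewrite /= ?invr1.
  by case: eqP => _ /=; rewrite ?ge_min lexx.
by rewrite gt_eqF ?(lt_trans ltr01) //= ge_min lexx orbT.
Qed.

Lemma ratio_ge_inv (R : realFieldType) (M zg zo : R) :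
  0 < M -> 0 < zo -> zo <= M * zg -> M^-1 <= zg / zo.
Proof.
move=> M_gt0 zo_gt0 zoM; rewrite ler_pdivlMr //.
by rewrite -(mulKf (lt0r_neq0 M_gt0) zg) ler_wpM2l // invr_ge0 ltW.
Qed.

Section Allocation.
Variables (R : realFieldType) (Usr Res : finType) (Z : Usr -> {set Res} -> R).

Lemma sec_setU1 (S : {set Usr * Res}) u j v :
  sec ((u, j) |: S) v = if v == u then j |: sec S v else sec S v.
Proof.
apply/setP => r; case: (eqVneq v u) => [->|ne]; rewrite /sec !inE xpair_eqE ?eqxx //.
by rewrite (negbTE ne).
Qed.

Lemma sec_subset (A B : {set Usr * Res}) v : A \subset B -> sec A v \subset sec B v.
Proof. by move=> AB; apply/subsetP => r; rewrite !inE; apply: (subsetP AB). Qed.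

Lemma Ztot_setU1 (S : {set Usr * Res}) u j :
  Ztot Z ((u, j) |: S) = Ztot Z S + rho Z u j S.
Proof.
rewrite /Ztot (bigD1 u) //= [in RHS](bigD1 u) //= sec_setU1 eqxx.
rewrite (eq_bigr (fun v => Z v (sec S v))); last first.
  by move=> v nv; rewrite sec_setU1 (negbTE nv).
rewrite /rho; lra.
Qed.

Lemma rho_mem (S : {set Usr * Res}) u j : (u, j) \in S -> rho Z u j S = 0.
Proof. by move=> ujS; rewrite /rho (setUidPr _) ?subrr // sub1set inE. Qed.

Hypothesis Z0 : forall u, Z u set0 = 0.
Hypothesis Zmono : forall u (A B : {set Res}), A \subset B -> Z u A <= Z u B.
Hypothesis Zsubmod :
  forall u (A B : {set Res}), Z u (A :|: B) + Z u (A :&: B) <= Z u A + Z u B.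

Lemma Ztot_ge0 S : 0 <= Ztot Z S.
Proof. by apply: sumr_ge0 => v _; rewrite -(Z0 v) Zmono ?sub0set. Qed.

Lemma rho_ge0 u j S : 0 <= rho Z u j S.
Proof. by rewrite subr_ge0; apply: Zmono; apply: subsetUr. Qed.

Lemma marginal_antimono u (A B : {set Res}) r :
  A \subset B -> Z u (r |: B) - Z u B <= Z u (r |: A) - Z u A.
Proof.
move=> AB; have := Zsubmod u (r |: A) B.
rewrite -setUA (setUidPr AB).
have : Z u A <= Z u ((r |: A) :&: B) by apply: Zmono; rewrite subsetI subsetUr AB.
lra.
Qed.

Lemma rho_antimono u j (A B : {set Usr * Res}) :
  A \subset B -> rho Z u j B <= rho Z u j A.
Proof. by move=> AB; apply/marginal_antimono/sec_subset. Qed.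

Lemma rho_le_single u j S : rho Z u j S <= Z u [set j].
Proof.
by have := marginal_antimono u j (sub0set (sec S u)); rewrite setU0 Z0 subr0.
Qed.

Lemma curv_le1 u : curv Z u <= 1.
Proof.
rewrite /curv lerBlDr lerDl.
apply: le_bigmin => [|A _]; first exact: ler01.
apply: le_bigmin => [|r /andP[_ Zr]]; first exact: ler01.
by apply: divr_ge0; [rewrite subr_ge0 Zmono ?subsetUr | exact: ltW].
Qed.

Lemma curv_marginal u (A : {set Res}) r :
  r \notin A -> 0 < Z u [set r] -> (1 - curv Z u) * Z u [set r] <= Z u (r |: A) - Z u A.
Proof.
move=> rA Zr; rewrite -ler_pdivlMr // /curv opprB addrCA subrr addr0.
apply: le_trans (bigmin_le _ A _) _.
by apply: (bigmin_le_cond _ (j := r)); rewrite rA Zr.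
Qed.

Lemma curv_rho u j (G S : {set Usr * Res}) :
  j \notin sec S u -> (1 - curv Z u) * rho Z u j G <= rho Z u j S.
Proof.
move=> jS; have c1 : 0 <= 1 - curv Z u by rewrite subr_ge0 curv_le1.
have [Zj|Zj] := ltP 0 (Z u [set j]).
  exact: le_trans (ler_wpM2l c1 (rho_le_single _ _ _)) (curv_marginal jS Zj).
have -> : rho Z u j G = 0.
  by apply/eqP; rewrite eq_le rho_ge0 andbT (le_trans (rho_le_single _ _ _)).
by rewrite mulr0 rho_ge0.
Qed.

Lemma Ztot_set0 : Ztot Z set0 = 0.
Proof.
rewrite /Ztot big1 // => v _.
by rewrite (_ : sec set0 v = set0) ?Z0 //; apply/setP => r; rewrite !inE.
Qed.

Definition ext_le (x : ext R) (M : R) : bool := if x is Some a then a <= M else false.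

Lemma ext_le_emax (x y : ext R) M : ext_le (emax x y) M = ext_le x M && ext_le y M.
Proof. by case: x => [a|]; case: y => [b|] //=; rewrite ?ge_max ?andbF. Qed.

(* [1/d + c <= M] cleared of denominators: every rival gain is at most
   [(M - c) a], also when the second best gain is 0 and [d] is infinite. *)
Lemma greedy_rival_bound G u j v M :
  greedy_choice Z G u j -> ext_le (eaddr (einv (discr Z G u j)) (curv Z u)) M ->
  v != u -> rho Z v j G <= (M - curv Z u) * rho Z u j G.
Proof.
case/andP=> /forallP rho_max _; rewrite /discr.
set s := \big[Num.max/0]_(w | w != u) rho Z w j G => bound vu.
have vs : rho Z v j G <= s by apply: (le_bigmax_cond _ (j := v)).
apply: le_trans vs _; have [s0|s_neq0] := eqVneq s 0.
  move: bound; rewrite s0 eqxx /= add0r => cM.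
  by apply: mulr_ge0; [rewrite subr_ge0 | exact: rho_ge0].
have s_gt0 : 0 < s by rewrite lt_def s_neq0 bigmax_ge_id.
have a_gt0 : 0 < rho Z u j G.
  apply: lt_le_trans s_gt0 _.
  by apply: bigmax_le => [|w _]; [exact: rho_ge0 | exact: rho_max].
move: bound; rewrite (negbTE s_neq0) /= gt_eqF ?divr_gt0 //= invf_div.
by rewrite -lerBrDr -(ler_pM2r a_gt0) divfK ?gt_eqF.
Qed.

Lemma partition_owner (S : {set Usr * Res}) :
  is_partition S -> exists owner, forall v r, ((v, r) \in S) = (v == owner r).
Proof.
move=> /forallP Spart.
have /fin_all_exists[owner Sowner] :
    forall r, exists v, forall w, ((w, r) \in S) = (w == v).
  by move=> r; have /cards1P[v Sv] := Spart r; exists v => w; rewrite -in_set1 -Sv inE.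
by exists owner => v r; apply: Sowner.
Qed.

Section Optimum.
Variables (Omega : {set Usr * Res}) (owner : Res -> Usr).
Hypothesis Omega_owner : forall v r, ((v, r) \in Omega) = (v == owner r).

Definition Omega_on (js : seq Res) : {set Usr * Res} := [set x in Omega | x.2 \in js].

Lemma Omega_on_all js : (forall r, r \in js) -> Omega_on js = Omega.
Proof. by move=> js_all; apply/setP => x; rewrite inE js_all andbT. Qed.

Lemma Omega_on_cons j js : Omega_on (j :: js) = (owner j, j) |: Omega_on js.
Proof.
apply/setP => -[v r]; rewrite !inE Omega_owner xpair_eqE.
by case: (eqVneq r j) => [->|_]; rewrite ?andbT ?andbF //=; case: (v == owner j).
Qed.

Lemma greedy_step_bound (G W : {set Usr * Res}) u j M :
  1 <= M -> greedy_choice Z G u j ->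
  ext_le (eaddr (einv (discr Z G u j)) (curv Z u)) M ->
  G \subset W -> (u, j) \in W ->
  rho Z (owner j) j W - rho Z u j (Omega :|: G) <= (M - 1) * rho Z u j G.
Proof.
move=> M1 choice bound GW ujW; have a0 := rho_ge0 u j G.
have [ou|ou] := eqVneq (owner j) u.
  rewrite ou rho_mem // add0r (le_trans _ (mulr_ge0 _ a0)) ?subr_ge0 //.
  by rewrite oppr_le0 rho_ge0.
have rival := le_trans (rho_antimono _ _ GW) (greedy_rival_bound choice bound ou).
suff : (1 - curv Z u) * rho Z u j G <= rho Z u j (Omega :|: G) by lra.
have [ujG|ujG] := boolP ((u, j) \in G).
  by rewrite rho_mem // mulr0 rho_ge0.
by apply: curv_rho; rewrite inE in_setU Omega_owner eq_sym (negbTE ou).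
Qed.

(* [G] is the current greedy state and [W] the final greedy allocation, to
   which the optimal pairs of the remaining resources are being added. *)
Lemma greedy_telescope (rn : seq (Usr * Res)) (G W : {set Usr * Res}) M :
  1 <= M -> greedy_ok Z G rn -> ext_le (bound_max Z G rn) M ->
  G :|: [set x in rn] \subset W ->
  Ztot Z (W :|: Omega_on (map snd rn)) - Ztot Z W
    - (Ztot Z (Omega :|: (G :|: [set x in rn])) - Ztot Z (Omega :|: G))
  <= (M - 1) * (Ztot Z (G :|: [set x in rn]) - Ztot Z G).
Proof.
move=> M1; elim: rn G W => [|[u j] rest IH] G W /=.
  have -> : [set x in [::]] = set0 :> {set Usr * Res} by apply/setP => x; rewrite !inE.
  have -> : Omega_on [::] = set0 by apply/setP => x; rewrite !inE andbF.
  by rewrite !setU0 !subrr mulr0.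
case/andP=> choice ok; rewrite ext_le_emax => /andP[bound_t bound_rest] GW.
have Gcons : G :|: [set x in (u, j) :: rest] = ((u, j) |: G) :|: [set x in rest].
  by apply/setP => x; rewrite !inE; bool_congr.
rewrite Gcons in GW *.
have -> : W :|: Omega_on (j :: map snd rest)
           = ((owner j, j) |: W) :|: Omega_on (map snd rest).
  by rewrite Omega_on_cons setUCA setUA.
have {IH} := IH _ ((owner j, j) |: W) ok bound_rest (subset_trans GW (subsetUr _ _)).
rewrite (setUCA Omega [set (u, j)] G) !Ztot_setU1 mulrDr.
have GW' : G \subset W := subset_trans (subset_trans (subsetUr _ _) (subsetUl _ _)) GW.
have ujW : (u, j) \in W by apply: (subsetP GW); rewrite !inE eqxx.
have := greedy_step_bound M1 choice bound_t GW' ujW; lra.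
Qed.

End Optimum.
End Allocation.

Theorem theorem5 (R : realFieldType) (Usr Res : finType)
  (Z : Usr -> {set Res} -> R)
  (Hm : (2 <= #|Usr|)%N)
  (Hz0 : forall u, Z u set0 = 0)
  (Hmono : forall u (A B : {set Res}), A \subset B -> Z u A <= Z u B)
  (Hsub : forall u (A B : {set Res}), Z u (A :|: B) + Z u (A :&: B) <= Z u A + Z u B)
  (Omega : {set Usr * Res})
  (HOpart : is_partition Omega)
  (HOopt : forall P : {set Usr * Res}, is_partition P -> Ztot Z P <= Ztot Z Omega)
  (HOpos : 0 < Ztot Z Omega)
  (run : seq (Usr * Res))
  (Horder : perm_eq (map snd run) (enum Res))
  (Hgreedy : greedy_ok Z set0 run) :
  emin1 (einv (bound_max Z set0 run)) <= Ztot Z [set x in run] / Ztot Z Omega.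
Proof.
case bound: (bound_max Z set0 run) => [B|]; last first.
  by rewrite /= ge_min divr_ge0 ?orbT ?(Ztot_ge0 Hz0 Hmono) ?ltW.
have [owner Omega_owner] := partition_owner HOpart.
set M := Num.max 1 B; have M1 : 1 <= M by rewrite le_max lexx.
have bound_M : ext_le (bound_max Z set0 run) M by rewrite bound /= le_max lexx orbT.
have run_W : set0 :|: [set x in run] \subset [set x in run] by rewrite set0U.
have run_all : forall r, r \in map snd run by move=> r; rewrite (perm_mem Horder) mem_enum.
have := greedy_telescope Hz0 Hmono Hsub Omega_owner M1 Hgreedy bound_M run_W.
rewrite set0U setU0 Ztot_set0 // Omega_on_all // setUC => telescope.
apply: le_trans (emin1_einv_le B) (ratio_ge_inv _ HOpos _).
  exact: lt_le_trans ltr01 M1.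
rewrite -/M; lra.
Qed.
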